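(* Let $(A,\diamond,\alpha)$ be a Hom-zinbiel algebra and let $(\prec_i,\succ_i)_{i\ge0}$ be a Hom-dendriform formal deformation of $A$. Define $x*y=x\succ_1 y-y\prec_1 x$ for $x,y\in A$. Then $(A,\diamond,*,\alpha)$ is a Hom-pre-Poisson algebra.
   Context: A Hom-zinbiel algebra $(A,\diamond,\alpha)$: bilinear $\diamond$, linear $\alpha$ with $\alpha(x\diamond y)=\alpha(x)\diamond\alpha(y)$ and $\alpha(x)\diamond(y\diamond z)=(x\diamond y)\diamond\alpha(z)+(y\diamond x)\diamond\alpha(z)$. A Hom-dendriform algebra $(D,\prec,\succ,\alpha)$: bilinear $\prec,\succ$ and linear $\alpha$ which is a morphism for both products, such that $(x\prec y)\prec\alpha(z)=\alpha(x)\prec(y\prec z+y\succ z)$, $(x\succ y)\prec\alpha(z)=\alpha(x)\succ(y\prec z)$, $\alpha(x)\succ(y\succ z)=(x\prec y+x\succ y)\succ\alpha(z)$. A Hom-dendriform formal deformation of $(A,\diamond,\alpha)$ is a sequence of bilinear maps $\prec_i,\succ_i:A\otimes A\to A$ ($i\ge0$) with $x\succ_0 y=y\prec_0 x=x\diamond y$, such that the $\mathbb{K}[[t]]$-bilinear products $x\prec_t y=\sum_{i\ge0}(x\prec_i y)t^i$, $x\succ_t y=\sum_{i\ge0}(x\succ_i y)t^i$ on $A[[t]]$, together with the $t$-linear extension of $\alpha$, form a Hom-dendriform algebra $(A[[t]],\prec_t,\succ_t,\alpha)$. A Hom-pre-Lie algebra $(A,*,\alpha)$: $\alpha(x*y)=\alpha(x)*\alpha(y)$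 and $(x*y)*\alpha(z)-\alpha(x)*(y*z)=(y*x)*\alpha(z)-\alpha(y)*(x*z)$. A Hom-pre-Poisson algebra $(A,\diamond,*,\alpha)$: $(A,\diamond,\alpha)$ Hom-zinbiel, $(A,*,\alpha)$ Hom-pre-Lie, and $(x*y-y*x)\diamond\alpha(z)=\alpha(x)*(y\diamond z)-\alpha(y)\diamond(x*z)$, $(x\diamond y+y\diamond x)*\alpha(z)=\alpha(x)\diamond(y*z)+\alpha(y)\diamond(x*z)$ for all $x,y,z$. *)

From HB Require Import structures.
From mathcomp Require Import all_boot all_order all_algebra.
Set Implicit Arguments. Unset Strict Implicit. Unset Printing Implicit Defensive.
Import GRing.Theory.
Local Open Scope ring_scope.

Section HomAlgebras.
Variables (K : fieldType) (A : lmodType K).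

Definition linear_map (f : A -> A) : Prop :=
  forall (a : K) (x y : A), f (a *: x + y) = a *: f x + f y.

Definition bilinear_map (f : A -> A -> A) : Prop :=
  (forall (a : K) (x y z : A), f (a *: x + y) z = a *: f x z + f y z) /\
  (forall (a : K) (x y z : A), f z (a *: x + y) = a *: f z x + f z y).

Definition is_hom_zinbiel (dm : A -> A -> A) (alpha : A -> A) : Prop :=
  [/\ bilinear_map dm, linear_map alpha,
      (forall x y, alpha (dm x y) = dm (alpha x) (alpha y)) &
      (forall x y z, dm (alpha x) (dm y z)
                     = dm (dm x y) (alpha z) + dm (dm y x) (alpha z))].

Definition is_hom_pre_Lie (st : A -> A -> A) (alpha : A -> A) : Prop :=
  [/\ bilinear_map st, linear_map alpha,
      (forall x y, alpha (st x y) = st (alpha x) (alpha y)) &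
      (forall x y z, st (st x y) (alpha z) - st (alpha x) (st y z)
                     = st (st y x) (alpha z) - st (alpha y) (st x z))].

Definition is_hom_pre_Poisson (dm st : A -> A -> A) (alpha : A -> A) : Prop :=
  [/\ is_hom_zinbiel dm alpha, is_hom_pre_Lie st alpha,
      (forall x y z, dm (st x y - st y x) (alpha z)
                     = st (alpha x) (dm y z) - dm (alpha y) (st x z)) &
      (forall x y z, st (dm x y + dm y x) (alpha z)
                     = dm (alpha x) (st y z) + dm (alpha y) (st x z))].

(** Formal power series A[[t]]: the series sum_n (u n) t^n is represented
    by its coefficient sequence u : nat -> A. *)
Definition series := nat -> A.

Definition ser_add (u v : series) : series := fun n => u n + v n.

Definition ser_map (alpha : A -> A) (u : series) : series := fun n => alpha (u n).

(** K[[t]]-bilinear extension of the product x op_t y = sum_i (x op_i y) t^i: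
    the coefficient of t^n in u op_t v is sum_{i+j+k=n} (u_j op_i v_k). *)
Definition ser_op (op : nat -> A -> A -> A) (u v : series) : series :=
  fun n => \sum_(i < n.+1) \sum_(j < (n - i).+1) op i (u j) (v (n - i - j)%N).

Definition is_hom_dendriform_ser (precT succT : series -> series -> series)
  (alphaT : series -> series) : Prop :=
  [/\ (forall u v, alphaT (precT u v) = precT (alphaT u) (alphaT v)),
      (forall u v, alphaT (succT u v) = succT (alphaT u) (alphaT v)),
      (forall u v w, precT (precT u v) (alphaT w)
                     = precT (alphaT u) (ser_add (precT v w) (succT v w))),
      (forall u v w, precT (succT u v) (alphaT w)
                     = succT (alphaT u) (precT v w)) &
      (forall u v w, succT (alphaT u) (succT v w)
                     = succT (ser_add (precT u v) (succT u v)) (alphaT w))].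

Definition is_hom_dend_deformation (dm : A -> A -> A) (alpha : A -> A)
  (prec succ : nat -> A -> A -> A) : Prop :=
  [/\ (forall i, bilinear_map (prec i)),
      (forall i, bilinear_map (succ i)),
      (forall x y, succ 0%N x y = dm x y),
      (forall x y, prec 0%N y x = dm x y) &
      is_hom_dendriform_ser (ser_op prec) (ser_op succ) (ser_map alpha)].

End HomAlgebras.

From mathcomp Require Import all_boot all_order all_algebra.
From mathcomp Require Import zify.
Import GRing.Theory.
Set Implicit Arguments. Unset Strict Implicit. Unset Printing Implicit Defensive.
Local Open Scope ring_scope.

(* Evaluating the Hom-dendriform identities of (A[[t]], -<_t, >-_t, alpha) on
   constant series and reading off the coefficient of t^n gives, for each n,
   identities between the maps -<_i, >-_i of A (Section Coefficients).  Using
   x >-_0 y = y -<_0 x = x dm y, the coefficients of t^1 and t^2 become explicit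
   "order one" and "order two" identities.  Each Hom-pre-Poisson axiom is then a
   Z-linear combination of such identities: the two compatibility conditions
   come from order one, the Hom-pre-Lie identity from order two. *)

(* Reflexive normalisation in a zmodType: an expression built from atoms with
   +, - and 0 is mapped to its list of integer coefficients (one per atom);
   two expressions with the same coefficients evaluate to the same value. *)
Inductive zexpr := ZAtom of nat | ZAdd of zexpr & zexpr | ZOpp of zexpr | ZZero.

Fixpoint zeval (M : zmodType) (env : seq M) (e : zexpr) : M :=
  match e with
  | ZAtom n => nth 0 env n
  | ZAdd a b => zeval env a + zeval env b
  | ZOpp a => - zeval env a
  | ZZero => 0
  end.

Fixpoint coef_add (s1 s2 : seq int) : seq int :=
  match s1, s2 with
  | [::], _ => s2
  | _, [::] => s1
  | a :: s1', b :: s2' => (a + b) :: coef_add s1' s2'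
  end.

Definition coef_opp (s : seq int) : seq int := map (fun c => - c) s.

Fixpoint coefs (e : zexpr) : seq int :=
  match e with
  | ZAtom n => rcons (nseq n 0) 1
  | ZAdd a b => coef_add (coefs a) (coefs b)
  | ZOpp a => coef_opp (coefs a)
  | ZZero => [::]
  end.

Fixpoint lincomb (M : zmodType) (env : seq M) (s : seq int) : M :=
  match s with
  | [::] => 0
  | c :: s' => head 0 env *~ c + lincomb (behead env) s'
  end.

Lemma lincomb_add (M : zmodType) (env : seq M) (s1 s2 : seq int) :
  lincomb env (coef_add s1 s2) = lincomb env s1 + lincomb env s2.
Proof.
elim: s1 s2 env => [|a s1 IH] [|b s2] env /=; rewrite ?add0r ?addr0 //.
by rewrite IH mulrzDr addrACA.
Qed.

Lemma lincomb_opp (M : zmodType) (env : seq M) (s : seq int) :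
  lincomb env (coef_opp s) = - lincomb env s.
Proof.
elim: s env => [|a s IH] env /=; first by rewrite oppr0.
by rewrite IH mulrNz opprD.
Qed.

Lemma lincomb_atom (M : zmodType) (env : seq M) (n : nat) :
  lincomb env (rcons (nseq n 0) 1) = nth 0 env n.
Proof.
elim: n env => [|n IH] [|a env] /=;
  by rewrite ?IH ?nth_nil ?mulr1z ?mulr0z ?addr0 ?add0r.
Qed.

Lemma zeval_coefs (M : zmodType) (env : seq M) (e : zexpr) :
  zeval env e = lincomb env (coefs e).
Proof.
elim: e => [n|a IHa b IHb|a IHa|] //=.
- by rewrite lincomb_atom.
- by rewrite lincomb_add IHa IHb.
- by rewrite lincomb_opp IHa.
Qed.

Lemma lincomb_zero (M : zmodType) (env : seq M) (s : seq int) :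
  all (eq_op^~ 0) s -> lincomb env s = 0.
Proof.
elim: s env => [|a s IH] env //= /andP [/eqP -> zero_s].
by rewrite mulr0z add0r IH.
Qed.

Definition same_coefs (e1 e2 : zexpr) : bool :=
  all (eq_op^~ 0) (coef_add (coefs e1) (coef_opp (coefs e2))).

Lemma same_coefs_zeval (M : zmodType) (env : seq M) (e1 e2 : zexpr) :
  same_coefs e1 e2 -> zeval env e1 = zeval env e2.
Proof.
move=> same; apply/eqP; rewrite -subr_eq0; apply/eqP.
by rewrite !zeval_coefs -lincomb_opp -lincomb_add lincomb_zero.
Qed.

Ltac atom_index a env :=
  lazymatch env with
  | a :: _ => constr:(0%N)
  | _ :: ?l => let n := atom_index a l in constr:(n.+1)
  end.

Ltac atom_known a env :=
  lazymatch env with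
  | a :: _ => constr:(true)
  | _ :: ?l => atom_known a l
  | _ => constr:(false)
  end.

(* reify env t returns (env', e) with zeval env' e = t, env' extending env. *)
Ltac reify env t :=
  lazymatch t with
  | @GRing.add _ ?a ?b =>
      lazymatch reify env a with (?env1, ?ea) =>
        lazymatch reify env1 b with (?env2, ?eb) =>
          constr:((env2, ZAdd ea eb)) end end
  | @GRing.opp _ ?a =>
      lazymatch reify env a with (?env1, ?ea) => constr:((env1, ZOpp ea)) end
  | @GRing.zero _ => constr:((env, ZZero))
  | _ =>
      lazymatch atom_known t env with
      | true => let n := atom_index t env in constr:((env, ZAtom n))
      | false =>
          let env' := eval cbv [rcons] in (rcons env t) in
          let n := atom_index t env' in constr:((env', ZAtom n))
      end
  end.

(* Closes an equation between two sums of atoms that agree in every abelian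
   group. *)
Ltac zmod_norm :=
  lazymatch goal with
  | |- @eq ?T ?L ?R =>
      lazymatch reify (@nil T) L with (?env1, ?eL) =>
        lazymatch reify env1 R with (?env2, ?eR) =>
          change (zeval env2 eL = zeval env2 eR);
          apply: same_coefs_zeval; vm_compute; reflexivity
        end end
  end.

Lemma eqD (M : zmodType) (a b c d : M) : a = b -> c = d -> a + c = b + d.
Proof. by move=> -> ->. Qed.

Lemma eqN (M : zmodType) (a b : M) : a = b -> - a = - b.
Proof. by move=> ->. Qed.

Lemma eq_by_combination (M : zmodType) (L R l r : M) :
  l = r -> L - R = l - r -> L = R.
Proof. by move=> -> /eqP; rewrite subrr subr_eq0 => /eqP. Qed.

Section LinearMaps.
Variables (K : fieldType) (A : lmodType K).

Lemma linear_mapD (f : A -> A) : linear_map f -> forall x y, f (x + y) = f x + f y.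
Proof. by move=> lin_f x y; rewrite -{1}[x]scale1r lin_f scale1r. Qed.

Lemma linear_map0 (f : A -> A) : linear_map f -> f 0 = 0.
Proof. by move=> lin_f; apply: (@addrI _ (f 0)); rewrite -linear_mapD // !addr0. Qed.

Lemma linear_mapN (f : A -> A) : linear_map f -> forall x, f (- x) = - f x.
Proof.
by move=> lin_f x; apply: (@addrI _ (f x)); rewrite -linear_mapD // !subrr linear_map0.
Qed.

Lemma bilinear_linl (f : A -> A -> A) : bilinear_map f -> forall z, linear_map (f^~ z).
Proof. by case=> lin_l _ z a x y; apply: lin_l. Qed.

Lemma bilinear_linr (f : A -> A -> A) : bilinear_map f -> forall z, linear_map (f z).
Proof. by case=> _ lin_r z a x y; apply: lin_r. Qed.

Variables (f : A -> A -> A) (bil_f : bilinear_map f).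

Lemma bilinearDl x y z : f (x + y) z = f x z + f y z.
Proof. exact: linear_mapD (bilinear_linl bil_f z) x y. Qed.

Lemma bilinearDr x y z : f z (x + y) = f z x + f z y.
Proof. exact: linear_mapD (bilinear_linr bil_f z) x y. Qed.

Lemma bilinearNl x z : f (- x) z = - f x z.
Proof. exact: linear_mapN (bilinear_linl bil_f z) x. Qed.

Lemma bilinearNr x z : f z (- x) = - f z x.
Proof. exact: linear_mapN (bilinear_linr bil_f z) x. Qed.

Lemma bilinear0l z : f 0 z = 0.
Proof. exact: linear_map0 (bilinear_linl bil_f z). Qed.

Lemma bilinear0r z : f z 0 = 0.
Proof. exact: linear_map0 (bilinear_linr bil_f z). Qed.

End LinearMaps.

Section ConstantSeries.
Variables (K : fieldType) (A : lmodType K).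

Definition cst (x : A) : series A := fun n => if n is 0%N then x else 0.

Lemma ser_map_cst (alpha : A -> A) : linear_map alpha ->
  forall x, ser_map alpha (cst x) =1 cst (alpha x).
Proof. by move=> lin_alpha x [|n] //; rewrite /ser_map linear_map0. Qed.

Variables (op : nat -> A -> A -> A) (bil_op : forall i, bilinear_map (op i)).

Lemma ser_op_cstr (u w : series A) (z : A) : w =1 cst z ->
  forall n, ser_op op u w n = \sum_(i < n.+1) op i (u (n - i)%N) z.
Proof.
move=> wz n; apply: eq_bigr => i _.
rewrite big_ord_recr /= subnn wz big1 ?add0r // => j _.
rewrite wz; case sub_ij: (n - i - j)%N => [|k]; last exact: bilinear0r.
by have := ltn_ord j; lia.
Qed.

Lemma ser_op_cstl (u v : series A) (x : A) : u =1 cst x ->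
  forall n, ser_op op u v n = \sum_(i < n.+1) op i x (v (n - i)%N).
Proof.
move=> ux n; apply: eq_bigr => i _.
rewrite big_ord_recl /= subn0 ux big1 ?addr0 // => j _.
by rewrite ux bilinear0l.
Qed.

Lemma ser_op_cst (u v : series A) (x y : A) : u =1 cst x -> v =1 cst y ->
  forall n, ser_op op u v n = op n x y.
Proof.
move=> ux vy n; rewrite (ser_op_cstr _ vy) big_ord_recr /= subnn ux.
rewrite big1 ?add0r // => i _; rewrite ux.
case sub_i: (n - i)%N => [|k]; last exact: bilinear0l.
by have := ltn_ord i; lia.
Qed.

Lemma ser_op_cst_cst (x y : A) n : ser_op op (cst x) (cst y) n = op n x y.
Proof. exact: ser_op_cst. Qed.

End ConstantSeries.

Section Deformation.
Variables (K : fieldType) (A : lmodType K).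
Variables (dm : A -> A -> A) (alpha : A -> A) (prec succ : nat -> A -> A -> A).
Hypotheses (bil_dm : bilinear_map dm) (lin_alpha : linear_map alpha).
Hypotheses (bil_prec : forall i, bilinear_map (prec i))
           (bil_succ : forall i, bilinear_map (succ i)).
Hypotheses (succ0 : forall x y, succ 0%N x y = dm x y)
           (prec0 : forall x y, prec 0%N y x = dm x y).
Hypothesis dend : is_hom_dendriform_ser (ser_op prec) (ser_op succ) (ser_map alpha).

Definition star (x y : A) : A := succ 1%N x y - prec 1%N y x.

Section Coefficients.
Variables (n : nat) (x y z : A).
Let alpha_cst := ser_map_cst lin_alpha.

Lemma coef_alpha_prec : alpha (prec n x y) = prec n (alpha x) (alpha y).
Proof.
have [mul_prec _ _ _ _] := dend.
rewrite -(ser_op_cst bil_prec (alpha_cst x) (alpha_cst y)) -mul_prec.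
by rewrite /ser_map ser_op_cst_cst.
Qed.

Lemma coef_alpha_succ : alpha (succ n x y) = succ n (alpha x) (alpha y).
Proof.
have [_ mul_succ _ _ _] := dend.
rewrite -(ser_op_cst bil_succ (alpha_cst x) (alpha_cst y)) -mul_succ.
by rewrite /ser_map ser_op_cst_cst.
Qed.

Lemma coef_prec_prec :
  \sum_(i < n.+1) prec i (prec (n - i) x y) (alpha z)
  = \sum_(i < n.+1) prec i (alpha x) (prec (n - i) y z + succ (n - i) y z).
Proof.
have [_ _ axiom1 _ _] := dend.
transitivity (ser_op prec (ser_op prec (cst x) (cst y)) (ser_map alpha (cst z)) n).
  rewrite (ser_op_cstr bil_prec _ (alpha_cst z)); apply: eq_bigr => i _.
  by rewrite ser_op_cst_cst.
rewrite axiom1 (ser_op_cstl bil_prec _ (alpha_cst x)); apply: eq_bigr => i _.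
by rewrite /ser_add !ser_op_cst_cst.
Qed.

Lemma coef_succ_prec :
  \sum_(i < n.+1) prec i (succ (n - i) x y) (alpha z)
  = \sum_(i < n.+1) succ i (alpha x) (prec (n - i) y z).
Proof.
have [_ _ _ axiom2 _] := dend.
transitivity (ser_op prec (ser_op succ (cst x) (cst y)) (ser_map alpha (cst z)) n).
  rewrite (ser_op_cstr bil_prec _ (alpha_cst z)); apply: eq_bigr => i _.
  by rewrite ser_op_cst_cst.
rewrite axiom2 (ser_op_cstl bil_succ _ (alpha_cst x)); apply: eq_bigr => i _.
by rewrite ser_op_cst_cst.
Qed.

Lemma coef_succ_succ :
  \sum_(i < n.+1) succ i (alpha x) (succ (n - i) y z)
  = \sum_(i < n.+1) succ i (prec (n - i) x y + succ (n - i) x y) (alpha z).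
Proof.
have [_ _ _ _ axiom3] := dend.
transitivity (ser_op succ (ser_map alpha (cst x)) (ser_op succ (cst y) (cst z)) n).
  rewrite (ser_op_cstl bil_succ _ (alpha_cst x)); apply: eq_bigr => i _.
  by rewrite ser_op_cst_cst.
rewrite axiom3 (ser_op_cstr bil_succ _ (alpha_cst z)); apply: eq_bigr => i _.
by rewrite /ser_add !ser_op_cst_cst.
Qed.

End Coefficients.

(* Rewrites the coefficient identities above for n = 1, 2 into explicit form,
   replacing -<_0 and >-_0 by dm. *)
Local Ltac expand_sums :=
  rewrite !big_ord_recr !big_ord0 /= ?subnn ?subn0 ?subSS !add0r ?prec0 ?succ0.

Lemma order1_prec_prec x y z :
  dm (alpha z) (prec 1%N x y) + prec 1%N (dm y x) (alpha z)
  = dm (prec 1%N y z + succ 1%N y z) (alpha x) + prec 1%N (alpha x) (dm z y + dm y z).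
Proof. by have := coef_prec_prec 1 x y z; expand_sums. Qed.

Lemma order1_succ_prec x y z :
  dm (alpha z) (succ 1%N x y) + prec 1%N (dm x y) (alpha z)
  = dm (alpha x) (prec 1%N y z) + succ 1%N (alpha x) (dm z y).
Proof. by have := coef_succ_prec 1 x y z; expand_sums. Qed.

Lemma order1_succ_succ x y z :
  dm (alpha x) (succ 1%N y z) + succ 1%N (alpha x) (dm y z)
  = dm (prec 1%N x y + succ 1%N x y) (alpha z) + succ 1%N (dm y x + dm x y) (alpha z).
Proof. by have := coef_succ_succ 1 x y z; expand_sums. Qed.

Lemma order2_prec_prec x y z :
  dm (alpha z) (prec 2%N x y) + prec 1%N (prec 1%N x y) (alpha z)
    + prec 2%N (dm y x) (alpha z)
  = dm (prec 2%N y z + succ 2%N y z) (alpha x)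
    + prec 1%N (alpha x) (prec 1%N y z + succ 1%N y z)
    + prec 2%N (alpha x) (dm z y + dm y z).
Proof. by have := coef_prec_prec 2 x y z; expand_sums. Qed.

Lemma order2_succ_prec x y z :
  dm (alpha z) (succ 2%N x y) + prec 1%N (succ 1%N x y) (alpha z)
    + prec 2%N (dm x y) (alpha z)
  = dm (alpha x) (prec 2%N y z) + succ 1%N (alpha x) (prec 1%N y z)
    + succ 2%N (alpha x) (dm z y).
Proof. by have := coef_succ_prec 2 x y z; expand_sums. Qed.

Lemma order2_succ_succ x y z :
  dm (alpha x) (succ 2%N y z) + succ 1%N (alpha x) (succ 1%N y z)
    + succ 2%N (alpha x) (dm y z)
  = dm (prec 2%N x y + succ 2%N x y) (alpha z)
    + succ 1%N (prec 1%N x y + succ 1%N x y) (alpha z)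
    + succ 2%N (dm y x + dm x y) (alpha z).
Proof. by have := coef_succ_succ 2 x y z; expand_sums. Qed.

Local Ltac expand_products :=
  rewrite /star; repeat progress rewrite
    ?(bilinearDl bil_dm) ?(bilinearDr bil_dm) ?(bilinearNl bil_dm) ?(bilinearNr bil_dm)
    ?(bilinearDl (bil_prec _)) ?(bilinearDr (bil_prec _))
    ?(bilinearNl (bil_prec _)) ?(bilinearNr (bil_prec _))
    ?(bilinearDl (bil_succ _)) ?(bilinearDr (bil_succ _))
    ?(bilinearNl (bil_succ _)) ?(bilinearNr (bil_succ _))
    ?(linear_mapD lin_alpha) ?(linear_mapN lin_alpha).

Lemma star_bilinear : bilinear_map star.
Proof.
have [prec1_l prec1_r] := bil_prec 1%N; have [succ1_l succ1_r] := bil_succ 1%N.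
by split=> a x y z;
  rewrite /star ?succ1_l ?prec1_r ?succ1_r ?prec1_l scalerBr opprD addrACA.
Qed.

(* alpha is multiplicative for star (coefficient of t^1 of its
   multiplicativity for -<_t and >-_t). *)
Lemma star_alpha x y : alpha (star x y) = star (alpha x) (alpha y).
Proof. by expand_products; rewrite coef_alpha_succ coef_alpha_prec. Qed.

Lemma star_compat_comm x y z :
  dm (star x y - star y x) (alpha z) = star (alpha x) (dm y z) - dm (alpha y) (star x z).
Proof.
move: (order1_succ_succ x y z) (order1_succ_succ y x z) (order1_succ_prec y z x).
expand_products => E1 E2 E3.
by apply: (eq_by_combination (eqD (eqD (eqN E1) E2) E3)); zmod_norm.
Qed.

Lemma star_compat_anticomm x y z :
  star (dm x y + dm y x) (alpha z) = dm (alpha x) (star y z) + dm (alpha y) (star x z).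
Proof.
move: (order1_succ_succ x y z) (order1_succ_prec x z y) (order1_prec_prec z x y).
expand_products => E1 E2 E3.
by apply: (eq_by_combination (eqD (eqD (eqN E1) (eqN E2)) E3)); zmod_norm.
Qed.

(* The Hom-pre-Lie identity for star, from the order two identities: the
   terms involving -<_2 and >-_2 cancel in the combination. *)
Lemma star_pre_Lie x y z :
  star (star x y) (alpha z) - star (alpha x) (star y z)
  = star (star y x) (alpha z) - star (alpha y) (star x z).
Proof.
move: (order2_succ_succ x y z) (order2_succ_prec x z y) (order2_succ_succ y x z)
  (order2_succ_prec y z x) (order2_prec_prec z x y) (order2_prec_prec z y x).
expand_products => E1 E2 E3 E4 E5 E6.
apply: (eq_by_combination
  (eqD (eqD (eqD (eqD (eqD (eqN E1) (eqN E2)) E3) E4) E5) (eqN E6))).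
by zmod_norm.
Qed.

Lemma star_hom_pre_Lie : is_hom_pre_Lie star alpha.
Proof. by split; [exact: star_bilinear | exact: lin_alpha | exact: star_alpha
  | exact: star_pre_Lie]. Qed.

Lemma star_hom_pre_Poisson :
  is_hom_zinbiel dm alpha -> is_hom_pre_Poisson dm star alpha.
Proof.
move=> zinbiel; split; [exact: zinbiel | exact: star_hom_pre_Lie
  | exact: star_compat_comm | exact: star_compat_anticomm].
Qed.

End Deformation.

Theorem theorem4p2 (K : fieldType) (A : lmodType K) (dm : A -> A -> A)
  (alpha : A -> A) (prec succ : nat -> A -> A -> A) :
  is_hom_zinbiel dm alpha ->
  is_hom_dend_deformation dm alpha prec succ ->
  is_hom_pre_Poisson dm (fun x y => succ 1%N x y - prec 1%N y x) alpha.
Proof.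
move=> zinbiel [bil_prec bil_succ succ0 prec0 dend].
have [bil_dm lin_alpha _ _] := zinbiel.
exact: (star_hom_pre_Poisson bil_dm lin_alpha bil_prec bil_succ succ0 prec0 dend).
Qed.
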